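(* Let $P=(p_{i,j})_{i,j=1}^N$ be an irreducible stochastic matrix, let $(X_m)_{m\ge0}$ be the Markov chain with transition matrix $P$, and let $p^n_{i,j}$ and $s_n$ be the GTH elimination quantities. For $2\le n\le N$, let $\tau_n=\inf\{m\ge1: X_m\in\{1,\dots,n-1\}\}$. Define: - for $1\le i<n$, $r_{i,n}=\mathbb E_i\big[\#\{m: 1\le m<\tau_n,\ X_m=n\}\big]$, the expected number of visits to $n$ before returning to $\{1,\dots,n-1\}$, starting from $i$; - for $1\le j<n$, $g_{n,j}=\mathbb P_n(X_{\tau_n}=j)$, the probability that, starting from $n$, the first state visited in $\{1,\dots,n-1\}$ is $j$; - for $1\le n\le N$, $\psi_n=p^n_{n,n}$; in particular $\psi_1=p^1_{1,1}=1$. Then, for $2\le n\le N$ and $1\le i,j\le n-1$, $$r_{i,n}=\frac{p^n_{i,n}}{s_n},\qquad g_{n,j}=\frac{p^n_{n,j}}{s_n}.$$ Moreover, $$I-P=(I-R_U)(I-\Psi_D)(I-G_L),$$ where: - $R_U$ is the $N\times N$ strictly upper triangular matrix with $(i,n)$ entry $r_{i,n}$ for $i<n$; - $\Psi_D=\mathrm{diag}(\psi_1,\dots,\psi_N)$; - $G_L$ is the $N\times N$ strictly lower triangular matrix with $(n,j)$ entry $g_{n,j}$ for $j<n$.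
   Context: GTH elimination: set $p^N_{i,j}=p_{i,j}$ for $1\le i,j\le N$. For $n=N,N-1,\dots,2$, set $s_n=\sum_{k=1}^{n-1}p^n_{n,k}$ and $$p^{n-1}_{i,j}=p^n_{i,j}+\frac{p^n_{i,n}p^n_{n,j}}{s_n}\qquad\text{for }1\le i,j\le n-1.$$ Irreducibility of $P$ guarantees that $s_n>0$ for all $n$. $\mathbb E_i$ and $\mathbb P_i$ denote expectation and probability for the chain started at $X_0=i$. *)

From HB Require Import structures.
From mathcomp Require Import all_boot all_order all_algebra.
From mathcomp Require Import all_classical all_reals all_analysis.

Set Implicit Arguments.
Unset Strict Implicit.
Unset Printing Implicit Defensive.

Import Order.TTheory GRing.Theory Num.Theory.
Local Open Scope ring_scope.

(* States of the chain are the ordinals 'I_N; the paper's state k (1 <= k <= N)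
   is the ordinal with value k-1. *)

Section Defs.
Variables (R : realType) (N : nat).
Implicit Types (P A : 'M[R]_N).

Definition stochastic P : Prop :=
  (forall i j, 0 <= P i j) /\ (forall i, \sum_j P i j = 1).

Definition irreducible P : Prop :=
  forall i j, exists m : nat, 0 < (P ^+ m) i j.

Definition gth_s A (p : 'I_N) : R := \sum_(k < N | (k < p)%N) A p k.

Definition gth_elim A (p : 'I_N) : 'M[R]_N :=
  \matrix_(i, j) (if (i < p)%N && (j < p)%N
                  then A i j + A i p * A p j / gth_s A p
                  else A i j).

(* gth P n = the paper's matrix p^{n+1} (n is 0-based): eliminate pivots
   N-1, N-2, ..., n+1 (0-based) in this order, starting from p^N = P. *)
Definition gth P (n : 'I_N) : 'M[R]_N :=
  foldl gth_elim P [seq k <- rev (enum 'I_N) | (n < (k : 'I_N))%N].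

Definition gthS P (n : 'I_N) : R := gth_s (gth P n) n.

Definition psi P (n : 'I_N) : R := gth P n n n.

(* For a trajectory x = (X_1, ..., X_m) of the chain started at X_0 = i,
   P_i(X_1 = x_1, ..., X_m = x_m) = p_{i,x_1} p_{x_1,x_2} ... p_{x_{m-1},x_m}. *)
Definition pathProb P (i : 'I_N) (m : nat) (x : m.-tuple 'I_N) : R :=
  \prod_(k < m) P (nth i (i :: x) k) (nth i (i :: x) k.+1).

Definition Prob P (i : 'I_N) (m : nat) (E : pred (m.-tuple 'I_N)) : R :=
  \sum_(x : m.-tuple 'I_N | E x) pathProb P i x.

(* If no such k <= m, the value is m+1,
   which correctly encodes the events {tau_n = k} and {k < tau_n} for k <= m. *)
Definition tauT (n : 'I_N) (m : nat) (x : m.-tuple 'I_N) : nat :=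
  (find (fun y : 'I_N => (y < n)%N) x).+1.

Local Open Scope ereal_scope.

(* r_{i,n} = E_i[#{m : 1 <= m < tau_n, X_m = n}]
           = sum_{m >= 1} P_i(m < tau_n, X_m = n). *)
Definition rvis P (i n : 'I_N) : \bar R :=
  \sum_(0 <= m <oo)
    (Prob P i (fun x : m.+1.-tuple 'I_N =>
        (m.+1 < tauT n x)%N && (last i x == n)))%:E.

Definition ghit P (n j : 'I_N) : \bar R :=
  \sum_(0 <= m <oo)
    (Prob P n (fun x : m.+1.-tuple 'I_N =>
        (tauT n x == m.+1) && (last n x == j)))%:E.

Local Close Scope ereal_scope.

Definition RU P : 'M[R]_N :=
  \matrix_(i, k) (if (i < k)%N then fine (rvis P i k) else 0).
Definition PsiD P : 'M[R]_N :=
  \matrix_(i, j) (if i == j then psi P i else 0).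
Definition GL P : 'M[R]_N :=
  \matrix_(k, j) (if (j < k)%N then fine (ghit P k j) else 0).

End Defs.

From HB Require Import structures.
From mathcomp Require Import all_boot all_order all_algebra.
From mathcomp Require Import all_classical all_reals all_analysis.
From mathcomp Require Import ring lra zify.
Import Order.TTheory GRing.Theory Num.Theory numFieldNormedType.Exports.
Local Open Scope ring_scope.

(* States are 0, ..., N-1.  For the taboo set {0, ..., n-1}, taboo P n is P
   with the columns of the taboo set deleted, and
   tabooSum P n = (I - taboo P n)^-1 P = sum_m (taboo P n)^m P.
   1. Path sums: the probability of avoiding the taboo set for m steps and
      then being at j is ((taboo P n)^m P)_kj (Prob_taboo), so r_{i,n} and
      g_{n,j} are entries of the series sum_m (taboo P n)^m P.
   2. Analysis: by irreducibility the row sums of (taboo P n)^M decay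
      geometrically, hence I - taboo P n is invertible and the series sums to
      tabooSum P n (taboo_series).
   3. Algebra: enlarging the taboo set by one state is a rank-one
      (Sherman-Morrison) update of tabooSum whose formula is exactly one GTH
      elimination step.  By downward induction, gth P n agrees with
      tabooSum P (n+1) on {0, ..., n} (gth_tabooSum), and s_{n+1} = 1 - psi_{n+1}
      is nonzero; this yields the formulas for r and g.
   4. The factorization is proved block by block, by upward induction on n,
      each elimination step contributing one rank-one term (factor_block). *)

Set Implicit Arguments.
Unset Strict Implicit.
Unset Printing Implicit Defensive.

Definition taboo (R : realType) (N : nat) (P : 'M[R]_N) (n : nat) : 'M[R]_N :=
  \matrix_(k, l) (if (n <= l)%N then P k l else 0).

(* tabooSum P n = sum_m taboo^m P: its (k, j) entry is, for j < n, the
   probability that the first visit to {0,...,n-1} is at j, and, for j >= n,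
   the expected number of visits to j before that time. *)
Definition tabooSum (R : realType) (N : nat) (P : 'M[R]_N) (n : nat) : 'M[R]_N :=
  invmx (1%:M - taboo P n) *m P.

Definition state0 (N : nat) (n : 'I_N) : 'I_N :=
  Ordinal (leq_ltn_trans (leq0n n) (ltn_ord n)).

Lemma state0_lt N (n : 'I_N) : (0 < n)%N -> (state0 n < n)%N.
Proof. by []. Qed.

Lemma ord_eqF_lt N (a b : 'I_N) : (a < b)%N -> (a == b) = false.
Proof. by move=> ab; apply/negbTE; rewrite neq_ltn ab. Qed.

Lemma ord_eqF_gt N (a b : 'I_N) : (b < a)%N -> (a == b) = false.
Proof. by move=> ba; apply/negbTE; rewrite neq_ltn ba orbT. Qed.

Lemma sum_delta (R : realType) (N : nat) (F : 'I_N -> R) (a : 'I_N) :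
  \sum_k (k == a)%:R * F k = F a.
Proof.
by rewrite (bigD1 a) //= eqxx mul1r big1 ?addr0 // => k /negPf ->; rewrite mul0r.
Qed.

Lemma sum_split_last (R : realType) (N : nat) (F : 'I_N -> R) (n : 'I_N) :
  \sum_(k < N | (k <= n)%N) F k = \sum_(k < N | (k < n)%N) F k + F n.
Proof.
rewrite (bigD1 n) //= addrC; congr (_ + _).
by apply: eq_bigl => k; rewrite ltn_neqAle andbC.
Qed.

Section PathProbabilities.
Variables (R : realType) (N : nat) (P : 'M[R]_N).

Lemma pathProb_cons (i y : 'I_N) m (t : m.-tuple 'I_N) :
  pathProb P i [tuple of y :: t] = P i y * pathProb P y t.
Proof.
rewrite /pathProb big_ord_recl /=; congr (_ * _); apply: eq_bigr => k _.
have kt : (k < size t)%N by rewrite size_tuple.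
rewrite /= !(set_nth_default y i) //= ltnS ltnW //.
Qed.

Lemma last_tupleS m (x : m.+1.-tuple 'I_N) (a b : 'I_N) : last a x = last b x.
Proof. by case: x => -[]. Qed.

Lemma sum_tuple0 (F : 0.-tuple 'I_N -> R) : \sum_(x : 0.-tuple 'I_N) F x = F [tuple].
Proof.
rewrite (big_pred1 [tuple]) // => t /=; symmetry; apply/eqP/val_inj.
by case: t => -[].
Qed.

Lemma sum_tupleS m (F : m.+1.-tuple 'I_N -> R) :
  \sum_(x : m.+1.-tuple 'I_N) F x =
  \sum_(y : 'I_N) \sum_(t : m.-tuple 'I_N) F [tuple of y :: t].
Proof.
rewrite pair_big /=.
rewrite (reindex (fun p : 'I_N * m.-tuple 'I_N => [tuple of p.1 :: p.2])) //=.
exists (fun x : m.+1.-tuple 'I_N => (thead x, [tuple of behead x])) => [[y t]|x] _ /=.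
  by congr (_, _); apply: val_inj.
by apply: val_inj; rewrite /= [in RHS](tuple_eta x).
Qed.

(* If an event of the first m+1 steps says "avoid the taboo set during the
   first m steps and be at j at step m+1", its probability from k is the
   (k, j) entry of taboo^m P. *)
Lemma Prob_taboo n (j : 'I_N) (E : forall m, pred (m.+1.-tuple 'I_N)) :
  (forall y, E 0%N [tuple y] = (y == j)) ->
  (forall m y (t : m.+1.-tuple 'I_N), E m.+1 [tuple of y :: t] = (n <= y)%N && E m t) ->
  forall m k, Prob P k (E m) = (taboo P n ^+ m *m P) k j.
Proof.
move=> E0 ES; elim=> [|m IH] k; rewrite /Prob big_mkcond sum_tupleS /=.
  under eq_bigr do rewrite sum_tuple0 E0.
  rewrite expr0 mul1mx (bigD1 j) //= big1 => [|y /negPf -> //].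
  by rewrite eqxx pathProb_cons /pathProb big_ord0 mulr1 addr0.
rewrite exprS -mulmxE -mulmxA mxE; apply: eq_bigr => y _.
rewrite -IH /Prob big_distrr [RHS]big_mkcond /= !mxE; apply: eq_bigr => t _.
by rewrite ES pathProb_cons; case: (n <= y)%N; case: (E m t); rewrite ?mulr0 ?mul0r.
Qed.

End PathProbabilities.

Section NonnegativeMatrices.
Variables (R : realType) (N : nat).
Implicit Types (B C : 'M[R]_N).

Lemma pow_ge0 B : (forall a b, 0 <= B a b) -> forall m k l, 0 <= (B ^+ m) k l.
Proof.
move=> B0; elim=> [|m IH] k l; first by rewrite expr0 mxE ler0n.
rewrite exprS -mulmxE mxE; apply: sumr_ge0 => y _; exact: mulr_ge0.
Qed.

Lemma pow_le B C : (forall a b, 0 <= B a b) -> (forall a b, B a b <= C a b) ->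
  forall m k l, (B ^+ m) k l <= (C ^+ m) k l.
Proof.
move=> B0 BC; elim=> [|m IH] k l; first by [].
rewrite !exprS -!mulmxE !mxE; apply: ler_sum => y _.
by apply: ler_pM => //; exact: pow_ge0.
Qed.

Lemma stochastic_pow_row (P : 'M[R]_N) m : stochastic P ->
  forall k, \sum_l (P ^+ m) k l = 1.
Proof.
case=> _ Prow; elim: m => [|m IH] k.
  rewrite expr0 (bigD1 k) //= big1 => [|l lk]; rewrite !mxE ?eqxx ?addr0 //.
  by rewrite eq_sym (negPf lk).
rewrite exprS -mulmxE; under eq_bigr do rewrite mxE.
rewrite exchange_big /= -(Prow k); apply: eq_bigr => y _.
by rewrite -big_distrr /= IH mulr1.
Qed.

End NonnegativeMatrices.

(* Throughout, P is irreducible and stochastic and the taboo set {0,...,n-1}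
   contains some state j0, so that the chain leaves the states >= n a.s. *)
Section TabooDecay.
Variables (R : realType) (N : nat) (P : 'M[R]_N).
Hypotheses (hS : stochastic P) (hI : irreducible P).
Variables (n : nat) (j0 : 'I_N).
Hypothesis hj0 : (j0 < n)%N.

Local Notation A := (taboo P n).

Lemma taboo_ge0 k l : 0 <= A k l.
Proof. by rewrite mxE; case: ifP => // _; case: hS. Qed.

Lemma taboo_le k l : A k l <= P k l.
Proof. by rewrite mxE; case: ifP => // _; case: hS. Qed.

(* mass M k = P_k(X_1, ..., X_M all avoid the taboo set). *)
Definition mass M (k : 'I_N) : R := \sum_l (A ^+ M) k l.

Lemma mass_ge0 M k : 0 <= mass M k.
Proof. by apply: sumr_ge0 => l _; exact: (pow_ge0 taboo_ge0). Qed.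

Lemma mass_le1 M k : mass M k <= 1.
Proof.
rewrite -(stochastic_pow_row M hS k); apply: ler_sum => l _.
exact: (pow_le taboo_ge0 taboo_le).
Qed.

Lemma massD a b k : mass (a + b) k = \sum_y (A ^+ a) k y * mass b y.
Proof.
rewrite /mass exprD -mulmxE; under eq_bigr do rewrite mxE.
by rewrite exchange_big /=; apply: eq_bigr => y _; rewrite big_distrr.
Qed.

Lemma mass_mono M M' k : (M <= M')%N -> mass M' k <= mass M k.
Proof.
move=> /subnK <-; rewrite addnC massD /mass ler_sum // => y _.
by rewrite ler_piMr ?mass_le1 //; exact: (pow_ge0 taboo_ge0).
Qed.

(* Avoiding the taboo set for M+1 steps and being in j0 at time M+1 are
   disjoint events. *)
Lemma mass_hit M k : mass M.+1 k + (P ^+ M.+1) k j0 <= 1.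
Proof.
rewrite -(stochastic_pow_row M.+1 hS k) /mass (bigD1 j0) //= [X in _ <= X](bigD1 j0) //=.
have -> : (A ^+ M.+1) k j0 = 0.
  rewrite exprSr -mulmxE mxE big1 // => y _.
  by rewrite mxE leqNgt hj0 mulr0.
rewrite add0r addrC lerD2r; apply: ler_sum => l _.
exact: (pow_le taboo_ge0 taboo_le).
Qed.

(* By irreducibility, from every state >= n the taboo set is reached with
   positive probability, uniformly after L steps. *)
Lemma mass_lt1 : exists L, forall k : 'I_N, (n <= k)%N -> mass L k < 1.
Proof.
have reach (k : 'I_N) : exists M, (n <= k)%N -> mass M k < 1.
  have [[|M] PM] := hI k j0; last by exists M.+1 => _; have := mass_hit M k; lra.
  exists 0%N => nk; move: PM; rewrite expr0 mxE.
  by case: eqP => [kj0|]; [move: nk; rewrite kj0 leqNgt hj0 | rewrite ltxx].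
have [f hf] := choice reach.
exists (\max_k f k) => k nk.
exact: le_lt_trans (mass_mono _ (leq_bigmax k)) (hf k nk).
Qed.

Lemma mass_contract : exists L c, 0 <= c < 1 /\ forall k, mass L k <= c.
Proof.
have [L hL] := mass_lt1.
set c := \big[Order.max/0]_(k : 'I_N | (n <= k)%N) mass L k.
have c0 : 0 <= c.
  rewrite /c; elim/big_ind: _ => // [x y x0 _|k _]; last exact: mass_ge0.
  by rewrite le_max x0.
have c1 : c < 1 by apply: bigmax_lt => // k /hL.
exists L.+1%N, c; split; first by rewrite c0 c1.
move=> k; rewrite -add1n massD.
apply: le_trans (_ : \sum_y (A ^+ 1) k y * c <= c).
  apply: ler_sum => y _; rewrite expr1 [A k y]mxE.
  case: (leqP n y) => ny; last by rewrite !mul0r.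
  by rewrite ler_wpM2l ?(le_bigmax_cond _ _ ny) //; case: hS.
by rewrite -big_distrl /= ler_piMl // (le_trans _ (mass_le1 1 k)).
Qed.

Lemma mass_cvg0 k : (mass ^~ k @ \oo --> 0)%classic.
Proof.
have [L [c [/andP[c0 c1] hc]]] := mass_contract.
have geom j l : mass (j * L) l <= c ^+ j.
  elim: j l => [|j IH] l; first by rewrite mul0n expr0 mass_le1.
  rewrite mulSn massD exprS.
  apply: le_trans (_ : \sum_y (A ^+ L) l y * c ^+ j <= _).
    by apply: ler_sum => y _; rewrite ler_wpM2l ?IH //; exact: (pow_ge0 taboo_ge0).
  by rewrite -big_distrl /= ler_wpM2r ?exprn_ge0 //; exact: hc.
apply/cvgrPdist_le => e e0.
have c1n : `|c| < 1 by rewrite ger0_norm.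
have /cvgrPdist_le/(_ e e0) [j _ hj] := cvg_expr c1n.
near=> M; rewrite sub0r normrN ger0_norm ?mass_ge0 //.
apply: le_trans (mass_mono _ _) (le_trans (geom j k) _).
- near: M; exists (j * L)%N => // M; exact.
- by have := hj j (leqnn j); rewrite /= sub0r normrN ger0_norm // exprn_ge0.
Unshelve. all: by end_near.
Qed.

Lemma taboo_pow_cvg0 p (Z : 'M[R]_(N, p)) k l :
  ((fun M => (A ^+ M *m Z) k l) @ \oo --> 0)%classic.
Proof.
set C := \sum_y `|Z y l|.
have bound M : `|(A ^+ M *m Z) k l| <= mass M k * C.
  rewrite mxE /mass big_distrl /=; apply: le_trans (ler_norm_sum _ _ _) _.
  apply: ler_sum => y _; rewrite normrM ger0_norm; last exact: (pow_ge0 taboo_ge0).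
  rewrite ler_wpM2l //; first exact: (pow_ge0 taboo_ge0).
  by rewrite /C (bigD1 y) //= lerDl sumr_ge0.
have lim0 : ((fun M => mass M k * C) @ \oo --> 0)%classic.
  by rewrite -(mul0r C); apply: cvgM (mass_cvg0 k) (cvg_cst C).
have nlim0 : ((fun M => - (mass M k * C)) @ \oo --> 0)%classic.
  by rewrite -oppr0; exact: cvgN.
apply: (squeeze_cvgr (g := fun M => (A ^+ M *m Z) k l) _ nlim0 lim0).
by near=> M; rewrite -ler_norml; exact: bound.
Unshelve. all: by end_near.
Qed.

(* A harmonic vector of the taboo matrix vanishes, so I - taboo is
   invertible. *)
Lemma taboo_unit : 1%:M - A \in unitmx.
Proof.
rewrite -unitmx_tr unitmxE unitfE; apply/negP => /det0P [v vn0 hv].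
have harm : A *m v^T = v^T.
  have : (1%:M - A) *m v^T = 0 by apply: trmx_inj; rewrite trmx_mul trmxK hv trmx0.
  by move/eqP; rewrite mulmxBl mul1mx subr_eq0 => /eqP.
have harmM M : A ^+ M *m v^T = v^T.
  by elim: M => [|M IH]; rewrite ?expr0 ?mul1mx // exprSr -mulmxE -mulmxA harm.
move/eqP: vn0; apply; apply/matrixP => i j; rewrite (ord1 i) mxE.
have := taboo_pow_cvg0 v^T j 0; under eq_fun do rewrite harmM.
by rewrite mxE => /(cvg_lim (@norm_hausdorff _ _)); rewrite norm_lim_cst.
Qed.

Local Notation X := (tabooSum P n).

Lemma taboo_partial_sum M : \sum_(0 <= m < M) A ^+ m *m P = X - A ^+ M *m X.
Proof.
have tele : (\sum_(0 <= m < M) A ^+ m) *m (1%:M - A) = 1%:M - A ^+ M.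
  elim: M => [|M IH]; first by rewrite big_geq // mul0mx expr0 subrr.
  rewrite big_nat_recr // mulmxDl IH mulmxBr mulmx1 exprSr mulmxE.
  by rewrite addrA subrK.
have PX : P = (1%:M - A) *m X by rewrite mulmxA mulmxV ?mul1mx // taboo_unit.
rewrite -mulmx_suml; transitivity ((\sum_(0 <= m < M) A ^+ m) *m ((1%:M - A) *m X)).
  by rewrite -PX.
by rewrite mulmxA tele mulmxBl mul1mx.
Qed.

Lemma taboo_series i j :
  (\sum_(0 <= m <oo) ((A ^+ m *m P) i j)%:E)%E = (X i j)%:E.
Proof.
have lim : ((fun M => \sum_(0 <= m < M) (A ^+ m *m P) i j) @ \oo --> X i j)%classic.
  have -> : (fun M => \sum_(0 <= m < M) (A ^+ m *m P) i j) =
            (fun M => X i j - (A ^+ M *m X) i j).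
    by apply/funext => M; rewrite -summxE taboo_partial_sum !mxE.
  rewrite -[Y in (_ --> Y)%classic]subr0.
  by apply: cvgB; [exact: cvg_cst | exact: taboo_pow_cvg0].
apply: cvg_lim => //; under eq_fun do rewrite sumEFin.
by apply: cvg_EFin; [near=> M | exact: lim].
Unshelve. all: by end_near.
Qed.

End TabooDecay.

Section TabooSumAlgebra.
Variables (R : realType) (N : nat) (P : 'M[R]_N).
Hypotheses (hS : stochastic P) (hI : irreducible P).

Lemma tabooSum_unique n (j0 : 'I_N) (Z : 'M[R]_N) : (j0 < n)%N ->
  (1%:M - taboo P n) *m Z = P -> tabooSum P n = Z.
Proof.
by move=> hj0 hZ; rewrite /tabooSum -[Y in invmx _ *m Y]hZ mulKmx // (taboo_unit hS hI hj0).
Qed.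

(* From any state the taboo set is entered almost surely: the first-entrance
   probabilities sum to one. *)
Lemma tabooSum_row n (j0 : 'I_N) k : (j0 < n)%N ->
  \sum_(l < N | (l < n)%N) tabooSum P n k l = 1.
Proof.
move=> hj0; set e : 'cV[R]_N := \col_l (if (l < n)%N then 1 else 0).
have h1 : (1%:M - taboo P n) *m const_mx 1 = P *m e.
  apply/matrixP => a b; rewrite !mxE.
  rewrite (eq_bigr (fun l => ((a == l)%:R - P a l) + P a l * e l b)); last first.
    by move=> l _; rewrite !mxE mulr1; case: (leqP n l) => hl; rewrite ?mulr1 ?mulr0; lra.
  rewrite big_split sumrB /= (bigD1 a) //= eqxx big1 ?addr0; last first.
    by move=> l /negPf; rewrite eq_sym => ->.
  by case: hS => _ ->; rewrite subrr add0r.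
have h2 : tabooSum P n *m e = const_mx 1.
  by rewrite /tabooSum -mulmxA -h1 mulKmx // (taboo_unit hS hI hj0).
have := congr1 (fun M : 'cV[R]_N => M k ord0) h2; rewrite !mxE => <-.
rewrite big_mkcond /=; apply: eq_bigr => l _; rewrite [e l _]mxE.
by case: ifP; rewrite ?mulr1 ?mulr0.
Qed.

(* With the whole state space as taboo set, the first step already enters it. *)
Lemma tabooSum_all : tabooSum P N = P.
Proof.
have A0 : taboo P N = 0 by apply/matrixP => i j; rewrite !mxE leqNgt ltn_ord.
by rewrite /tabooSum A0 subr0 invmx1 mul1mx.
Qed.

(* The GTH pivot sum in probabilistic form: from nn, the taboo set
   {0,...,nn} is entered somewhere, at nn or below it. *)
Lemma tabooSum_pivot_sum (nn : 'I_N) :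
  \sum_(k < N | (k < nn)%N) tabooSum P nn.+1 nn k = 1 - tabooSum P nn.+1 nn nn.
Proof.
move: (tabooSum_row nn (ltnSn nn)); rewrite (bigD1 nn) //= => <-; rewrite [RHS]addrC addKr.
by apply: eq_bigl => k; rewrite ltnS ltn_neqAle andbC.
Qed.

Lemma taboo_shrink (nn : 'I_N) i k : (1%:M - taboo P nn) i k =
  (1%:M - taboo P nn.+1) i k - (k == nn)%:R * P i k.
Proof.
rewrite !mxE; have [->|knn] := eqVneq k nn.
  by rewrite leqnn ltnn mul1r; lra.
rewrite mul0r subr0; have : val k != val nn by [].
by case: (ltngtP nn k) => hk //= _; rewrite ltnNge ?ltnW ?hk //= leqNgt hk.
Qed.

Lemma taboo_shrink_mul p (nn : 'I_N) (Z : 'M[R]_(N, p)) i j :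
  ((1%:M - taboo P nn) *m Z) i j =
  ((1%:M - taboo P nn.+1) *m Z) i j - P i nn * Z nn j.
Proof.
rewrite !mxE -(sum_delta (fun k => P i k * Z k j)) -sumrB; apply: eq_bigr => k _.
by rewrite taboo_shrink mulrBl mulrA.
Qed.

(* The GTH recursion in probabilistic form: with Y = tabooSum P (nn+1),
   enlarging the taboo set from {0,...,nn-1} to {0,...,nn} is a rank-one
   (Sherman-Morrison) update with denominator 1 - Y nn nn, the probability
   of not returning to nn before {0,...,nn-1}; irreducibility makes it
   nonzero. *)
Section RankOneUpdate.
Variable nn : 'I_N.
Hypothesis nn0 : (0 < nn)%N.
Let Y := tabooSum P nn.+1.

Let hY : (1%:M - taboo P nn.+1) *m Y = P.
Proof. by rewrite /Y /tabooSum mulKVmx // (taboo_unit hS hI (leqW (state0_lt nn0))). Qed.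

Let hYcol : (1%:M - taboo P nn.+1) *m col nn Y = col nn P.
Proof. by rewrite !colE mulmxA hY. Qed.

Lemma tabooSum_pivot : Y nn nn != 1.
Proof.
apply/negP => /eqP Y1.
have hu : (1%:M - taboo P nn) *m col nn Y = 0.
  apply/matrixP => i b; rewrite taboo_shrink_mul hYcol (ord1 b) [RHS]mxE.
  by rewrite ![col _ _ _ _]mxE Y1 mulr1 subrr.
have : col nn Y = 0.
  by rewrite -(mulKmx (taboo_unit hS hI (state0_lt nn0)) (col nn Y)) hu mulmx0.
move/(congr1 (fun M : 'cV[R]_N => M nn ord0)).
by rewrite [col _ _ _ _]mxE [RHS]mxE Y1 => /eqP; rewrite oner_eq0.
Qed.

Lemma tabooSum_step i j :
  tabooSum P nn i j = Y i j + Y i nn * Y nn j / (1 - Y nn nn).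
Proof.
have d0 : 1 - Y nn nn != 0 by rewrite subr_eq0 eq_sym tabooSum_pivot.
set Z := Y + (1 - Y nn nn)^-1 *: (col nn Y *m row nn Y).
have Zij a b : Z a b = Y a b + Y a nn * Y nn b / (1 - Y nn nn).
  rewrite mxE [in X in _ + X]mxE [in X in _ * X]mxE big_ord1.
  by rewrite ![col _ _ _ _]mxE ![row _ _ _ _]mxE [_^-1 * _]mulrC.
rewrite -Zij; suff -> : tabooSum P nn = Z by [].
apply: (tabooSum_unique (state0_lt nn0)).
apply/matrixP => a b; rewrite taboo_shrink_mul Zij /Z mulmxDr hY -scalemxAr mulmxA hYcol.
rewrite mxE [X in _ + X - _]mxE [X in _ + _ * X - _]mxE big_ord1.
by rewrite ![col _ _ _ _]mxE ![row _ _ _ _]mxE; field.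
Qed.

End RankOneUpdate.
End TabooSumAlgebra.

Lemma gth_pivots N (m : nat) : (m < N)%N ->
  map val [seq k <- rev (enum 'I_N) | (m < val k)%N] = rev (iota m.+1 (N - m.+1)).
Proof.
move=> mN; rewrite -(filter_map val (fun x => m < x)%N) map_rev val_enum_ord.
rewrite filter_rev -{1}(subnKC mN) iotaD filter_cat add0n.
rewrite (eq_in_filter (a2 := pred0)) ?filter_pred0; last first.
  by move=> x; rewrite mem_iota add0n /= ltnS => h; rewrite ltnNge h.
rewrite (eq_in_filter (a2 := predT)) ?filter_predT //.
by move=> x; rewrite mem_iota => /andP[].
Qed.

Section GTHElimination.
Variables (R : realType) (N : nat) (P : 'M[R]_N).

Lemma gth_last (n : 'I_N) : val n = N.-1 -> gth P n = P.
Proof.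
move=> hn; rewrite /gth.
suff -> : [seq k <- rev (enum 'I_N) | (n < (k : 'I_N))%N] = [::] by [].
apply: (inj_map val_inj); rewrite gth_pivots // hn.
by case: N n hn => [[]//|N'] n hn /=; rewrite subnn.
Qed.

Lemma gth_pred (n n' : 'I_N) : (0 < n)%N -> val n' = (val n).-1 ->
  gth P n' = gth_elim (gth P n) n.
Proof.
move=> n0 hn'; rewrite /gth -foldl_rcons; congr foldl; apply: (inj_map val_inj).
rewrite map_rcons !gth_pivots // hn' prednK // -[(N - n)%N]prednK ?subn_gt0 //.
by rewrite -subnS rev_cons.
Qed.

End GTHElimination.

(* The probabilistic meaning of GTH elimination: the matrix p^{n+1} of the
   paper is the upper-left block of tabooSum P (n+1), i.e. the chain watched
   only on {0,...,n}. *)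
Section GTHProbabilistic.
Variables (R : realType) (N : nat) (P : 'M[R]_N).
Hypotheses (hS : stochastic P) (hI : irreducible P).

(* Downward induction on n, from gth P (N-1) = P = tabooSum P N; the step is
   gth_pred matched with tabooSum_step. *)
Lemma gth_tabooSum (n i j : 'I_N) : (i <= n)%N -> (j <= n)%N ->
  gth P n i j = tabooSum P n.+1 i j.
Proof.
move: {2}(N - n)%N (erefl (N - n)%N) => d; elim: d n i j => [|d IH] n i j hd hi hj.
  by move: (ltn_ord n); rewrite -subn_gt0 hd.
have [dn|dn] := eqVneq d 0%N.
  have hn : n.+1 = N by move: hd (ltn_ord n); rewrite dn; lia.
  have -> : gth P n = P by apply: gth_last; rewrite -[in RHS]hn.
  by rewrite hn tabooSum_all.
have hn1 : (n.+1 < N)%N by move: hd (ltn_ord n) dn; lia.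
pose n1 : 'I_N := Ordinal hn1.
have IH1 (k l : 'I_N) : (k <= n1)%N -> (l <= n1)%N -> gth P n1 k l = tabooSum P n1.+1 k l.
  by apply: IH; rewrite /= subnS hd.
rewrite (@gth_pred _ _ P n1 n) // mxE /= !ltnS hi hj /= !IH1 // ?leqW //.
have -> : gth_s (gth P n1) n1 = 1 - tabooSum P n1.+1 n1 n1.
  rewrite -(tabooSum_pivot_sum hS hI n1) /gth_s.
  by apply: eq_bigr => k hk; rewrite IH1 // ltnW.
by rewrite -(tabooSum_step hS hI (_ : 0 < n1)%N).
Qed.

Lemma gthS_psi (n : 'I_N) : gthS P n = 1 - gth P n n n.
Proof.
rewrite /gthS /gth_s gth_tabooSum // -(tabooSum_pivot_sum hS hI n).
by apply: eq_bigr => k hk; rewrite gth_tabooSum // ltnW.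
Qed.

Lemma gthS_neq0 (n : 'I_N) : (0 < n)%N -> gthS P n != 0.
Proof.
by move=> n0; rewrite gthS_psi gth_tabooSum // subr_eq0 eq_sym tabooSum_pivot.
Qed.

(* Entries of tabooSum P n in the pivot row and column, read off from the
   rank-one update. *)
Lemma tabooSum_pivot_col (n i : 'I_N) : (0 < n)%N -> (i <= n)%N ->
  tabooSum P n i n = gth P n i n / gthS P n.
Proof.
move=> n0 hi; have := gthS_neq0 n0; rewrite gthS_psi !gth_tabooSum //.
by rewrite (tabooSum_step hS hI n0) => d0; field.
Qed.

Lemma tabooSum_pivot_row (n j : 'I_N) : (0 < n)%N -> (j <= n)%N ->
  tabooSum P n n j = gth P n n j / gthS P n.
Proof.
move=> n0 hj; have := gthS_neq0 n0; rewrite gthS_psi !gth_tabooSum //.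
by rewrite (tabooSum_step hS hI n0) => d0; field.
Qed.

Lemma rvis_tabooSum (n i : 'I_N) : (0 < n)%N -> rvis P i n = (tabooSum P n i n)%:E.
Proof.
move=> n0; rewrite /rvis -(taboo_series hS hI (state0_lt n0)).
apply: eq_eseriesr => m _; congr (_%:E).
apply: (@Prob_taboo _ _ P n _ (fun m x => (m.+1 < tauT n x)%N && (last i x == n))).
  move=> y; rewrite /tauT /=; case: (ltnP y n) => // yn.
  by case: (y =P n) yn => // ->; rewrite ltnn.
by move=> {}m y t; rewrite /tauT /= (last_tupleS t y i); case: (ltnP y n).
Qed.

Lemma ghit_tabooSum (n j : 'I_N) : (j < n)%N -> ghit P n j = (tabooSum P n n j)%:E.
Proof.
move=> jn; rewrite /ghit -(taboo_series hS hI jn).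
apply: eq_eseriesr => m _; congr (_%:E).
apply: (@Prob_taboo _ _ P n _ (fun m x => (tauT n x == m.+1) && (last n x == j))).
  move=> y; rewrite /tauT /=; case: (ltnP y n) => // ny.
  by case: (y =P j) ny => // ->; rewrite leqNgt jn.
by move=> {}m y t; rewrite /tauT /= (last_tupleS t y n); case: (ltnP y n).
Qed.

End GTHProbabilistic.

(* The factorization, proved block by block: writing s_k = gthS P k and
   U = I - RU, L = I - GL, the upper-left (n+1) x (n+1) block of
   I - gth P n is sum_(k <= n) U_ik s_k L_kj.  Passing from n-1 to n adds
   the rank-one term of the elimination step with pivot n. *)
Section Factorization.
Variables (R : realType) (N : nat) (P : 'M[R]_N).
Hypotheses (hS : stochastic P) (hI : irreducible P).

Local Notation U := (1%:M - RU P).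
Local Notation L := (1%:M - GL P).

(* By the first two parts of the theorem, the entries of U and L are
   quotients of GTH quantities. *)
Lemma U_entry (i k : 'I_N) :
  U i k = if (i < k)%N then - (gth P k i k / gthS P k) else (i == k)%:R.
Proof.
rewrite !mxE; case: ltngtP => ik; rewrite ?subr0 //.
have k0 : (0 < k)%N := leq_ltn_trans (leq0n i) ik.
rewrite (ord_eqF_lt ik) (rvis_tabooSum hS hI i k0) /=.
by rewrite (tabooSum_pivot_col hS hI k0 (ltnW ik)) sub0r.
Qed.

Lemma L_entry (k j : 'I_N) :
  L k j = if (j < k)%N then - (gth P k k j / gthS P k) else (k == j)%:R.
Proof.
rewrite !mxE; case: ltngtP => jk; rewrite ?subr0 //.
have k0 : (0 < k)%N := leq_ltn_trans (leq0n j) jk.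
rewrite (ord_eqF_gt jk) (ghit_tabooSum hS hI jk) /=.
by rewrite (tabooSum_pivot_row hS hI k0 (ltnW jk)) sub0r.
Qed.

Lemma D_entry (l k : 'I_N) : (1%:M - PsiD P) l k = (l == k)%:R * gthS P l.
Proof.
rewrite !mxE; case: eqP => [->|_]; last by rewrite mul0r subr0.
by rewrite mul1r /psi (gthS_psi hS hI k).
Qed.

Lemma factors_entry (i j : 'I_N) :
  (U *m (1%:M - PsiD P) *m L) i j = \sum_k U i k * gthS P k * L k j.
Proof.
rewrite [LHS]mxE; apply: eq_bigr => k _; congr (_ * _).
rewrite [LHS]mxE (eq_bigr (fun l => (l == k)%:R * (U i l * gthS P l))).
  exact: sum_delta.
by move=> l _; rewrite D_entry mulrCA.
Qed.


(* The border row i = n and column j = n of the block come from the single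
   term k = n, since U is upper and L lower triangular. *)
Lemma factor_border (n i j : 'I_N) : (i <= n)%N -> (j <= n)%N -> (i == n) || (j == n) ->
  (i == j)%:R - gth P n i j = \sum_(k < N | (k <= n)%N) U i k * gthS P k * L k j.
Proof.
move=> hi hj hb; rewrite sum_split_last big1 ?add0r; last first.
  move=> k kn; case/orP: hb => /eqP->.
    by rewrite U_entry ltnNge (ltnW kn) /= (ord_eqF_gt kn) !mul0r.
  by rewrite L_entry ltnNge (ltnW kn) /= (ord_eqF_lt kn) mulr0.
rewrite U_entry L_entry; case/orP: hb => /eqP ->; rewrite ltnn eqxx ?mulr1 ?mul1r.
- case: (leqP n j) => jn.
    have ejn : j = n by apply: val_inj; apply/eqP; rewrite eqn_leq hj jn.
    by rewrite ejn eqxx mulr1 (gthS_psi hS hI).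
  have := gthS_neq0 hS hI (leq_ltn_trans (leq0n j) jn).
  by rewrite (ord_eqF_gt jn) sub0r => s0; field.
- case: (leqP n i) => inn.
    have ein : i = n by apply: val_inj; apply/eqP; rewrite eqn_leq hi inn.
    by rewrite ein eqxx mul1r (gthS_psi hS hI).
  have := gthS_neq0 hS hI (leq_ltn_trans (leq0n i) inn).
  by rewrite (ord_eqF_lt inn) sub0r => s0; field.
Qed.

Lemma factor_block (n i j : 'I_N) : (i <= n)%N -> (j <= n)%N ->
  (i == j)%:R - gth P n i j = \sum_(k < N | (k <= n)%N) U i k * gthS P k * L k j.
Proof.
move: {2}(val n) (erefl (val n)) => m; elim: m n i j => [|m IH] n i j hn hi hj.
  apply: factor_border => //; apply/orP; left; apply/eqP/val_inj.
  by apply/eqP; rewrite eqn_leq hi hn.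
have [in_|] := boolP ((i == n) || (j == n)); first exact: factor_border.
rewrite negb_or => /andP[ni nj].
have hi' : (i < n)%N by rewrite ltn_neqAle ni hi.
have hj' : (j < n)%N by rewrite ltn_neqAle nj hj.
have n0 : (0 < n)%N by rewrite hn.
have mN : (m < N)%N by move: (ltn_ord n); rewrite hn; lia.
pose n' : 'I_N := Ordinal mN.
have le_n' (k : 'I_N) : (k < n)%N -> (k <= n')%N by move=> kn; rewrite /= -ltnS -hn.
have := IH n' i j erefl (le_n' _ hi') (le_n' _ hj').
have pred_n : val n' = (val n).-1 by rewrite hn.
rewrite (gth_pred P n0 pred_n) mxE hi' hj' /= sum_split_last.
have -> : \sum_(k < N | (k <= n')%N) U i k * gthS P k * L k j =
          \sum_(k < N | (k < n)%N) U i k * gthS P k * L k j.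
  by apply: eq_bigl => k; rewrite hn.
move=> <-; rewrite U_entry L_entry hi' hj'.
by have := gthS_neq0 hS hI n0; rewrite /gthS => s0; field.
Qed.

(* The whole matrix is the block of the last state, where gth P = P. *)
Lemma factorization : 1%:M - P = U *m (1%:M - PsiD P) *m L.
Proof.
apply/matrixP => i j; rewrite factors_entry.
have lastN : (N.-1 < N)%N by rewrite prednK // (leq_ltn_trans (leq0n i) (ltn_ord i)).
pose last_state : 'I_N := Ordinal lastN.
have le_last (k : 'I_N) : (k <= last_state)%N by move: (ltn_ord k) => /=; lia.
have -> : (1%:M - P) i j = (i == j)%:R - P i j by rewrite !mxE.
have := factor_block (le_last i) (le_last j); rewrite gth_last // => ->.
by apply: eq_bigl => k; rewrite le_last.
Qed.

End Factorization.

Theorem mainTheorem3 (R : realType) (N : nat) (P : 'M[R]_N)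
    (hS : stochastic P) (hI : irreducible P) :
  (forall n i : 'I_N, (0 < n)%N -> (i < n)%N ->
     rvis P i n = (gth P n i n / gthS P n)%:E) /\
  (forall n j : 'I_N, (0 < n)%N -> (j < n)%N ->
     ghit P n j = (gth P n n j / gthS P n)%:E) /\
  1%:M - P = (1%:M - RU P) *m (1%:M - PsiD P) *m (1%:M - GL P).
Proof.
split; [|split].
- move=> n i n0 hi.
  by rewrite (rvis_tabooSum hS hI i n0) (tabooSum_pivot_col hS hI n0 (ltnW hi)).
- move=> n j n0 hj.
  by rewrite (ghit_tabooSum hS hI hj) (tabooSum_pivot_row hS hI n0 (ltnW hj)).
- exact: factorization hS hI.
Qed.
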